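(* Let $\phi$ be a Pogorelov solution and $\phi^*(x)=\sup_{y\in B(0,1)}\{x\cdot y-\phi(y)\}$ its Legendre–Fenchel dual. Define $\psi:\mathbb{R}^2\to\mathbb{R}$ by \[ \psi(x)=\min_{1\le k\le K}\{\phi^*(d_k)+\|x-d_k\|\}. \] Then $\phi^*=\psi^{**}$, i.e. $\phi^*$ is the convex envelope of $\psi$ (the largest convex function lying below $\psi$).
   Context: Let $K\ge 1$, $d_1,\dots,d_K\in\mathbb{R}^2$, $\alpha_1,\dots,\alpha_K>0$ with $\sum_k\alpha_k=\pi=|B(0,1)|$, where $B(0,1)$ is the unit ball of $\mathbb{R}^2$ and $|\cdot|$ is Lebesgue measure. A Pogorelov solution is a function $\phi(y)=\max_{k}\{y\cdot d_k-v_k\}$ on $B(0,1)$ (extended by $+\infty$ outside $B(0,1)$), for some reals $v_1,\dots,v_K$, such that $|C_k|=\alpha_k$ for every $k$, where $C_k=\{y\in B(0,1):\phi$ is differentiable at $y$ and $\nabla\phi(y)=d_k\}$. $\psi^{**}$ denotes the double Legendre–Fenchel transform of $\psi$. *)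

From HB Require Import structures.
From mathcomp Require Import all_boot all_order all_algebra.
From mathcomp Require Import all_classical all_reals all_analysis.
Set Implicit Arguments. Unset Strict Implicit. Unset Printing Implicit Defensive.
Import Order.TTheory GRing.Theory Num.Theory.
Import numFieldNormedType.Exports.
Local Open Scope classical_set_scope.
Local Open Scope ring_scope.

Section Pogorelov.
Variable R : realType.

Definition dot2 (x y : R * R) : R := x.1 * y.1 + x.2 * y.2.
Definition enorm2 (x : R * R) : R := Num.sqrt (dot2 x x).

Definition unit_ball2 : set (R * R) := [set y | enorm2 y < 1].

Definition leb2 := ((@lebesgue_measure R) \x (@lebesgue_measure R))%E.

(* y |-> max_k { y . d_k - v_k }  (real valued; the max is over k < K, K >= 1) *)
Definition pmax (K : nat) (d : 'I_K -> R * R) (v : 'I_K -> R) (y : R * R) : R :=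
  fine (\big[Order.max/-oo%E]_(k < K) ((dot2 y (d k) - v k)%:E))%E.

Definition phi_ext (K : nat) (d : 'I_K -> R * R) (v : 'I_K -> R) (y : R * R)
  : \bar R :=
  if `[< unit_ball2 y >] then (pmax d v y)%:E else +oo%E.

Definition Cset (K : nat) (d : 'I_K -> R * R) (v : 'I_K -> R) (k : 'I_K)
  : set (R * R) :=
  [set y | unit_ball2 y /\ differentiable (pmax d v) y /\
           (forall h : R * R, 'd (pmax d v) y h = dot2 h (d k))].

Definition pogorelov (K : nat) (d : 'I_K -> R * R) (alpha : 'I_K -> R)
  (v : 'I_K -> R) : Prop :=
  forall k, leb2 (Cset d v k) = (alpha k)%:E.

Definition legendre (f : R * R -> \bar R) (y : R * R) : \bar R :=
  ereal_sup [set ((dot2 x y)%:E - f x)%E | x in [set: R * R]].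

Definition phi_star (K : nat) (d : 'I_K -> R * R) (v : 'I_K -> R) (x : R * R)
  : \bar R :=
  ereal_sup [set ((dot2 x y)%:E - phi_ext d v y)%E | y in unit_ball2].

Definition psi (K : nat) (d : 'I_K -> R * R) (v : 'I_K -> R) (x : R * R)
  : \bar R :=
  (\big[Order.min/+oo%E]_(k < K) (phi_star d v (d k) + (enorm2 (x - d k))%:E))%E.

End Pogorelov.

From HB Require Import structures.
From mathcomp Require Import all_boot all_order all_algebra.
From mathcomp Require Import all_classical all_reals all_analysis.
From mathcomp Require Import ring lra.
Import Order.TTheory GRing.Theory Num.Theory.
Import numFieldNormedType.Exports.
Local Open Scope classical_set_scope.
Local Open Scope ring_scope.

(** Since [phi^*] is convex and 1-Lipschitz,
    it lies below [psi] and hence below [psi^**].  Conversely, [psi] agrees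
    with [phi^*] at the points [d_k] and grows only linearly, with slope 1,
    away from them, so [psi^*] coincides with the polyhedral function [phi] on
    the closed unit ball and is [+oo] outside it.  Hence
    [psi^**(x) = sup_{|y| <= 1} (x.y - phi(y))], which is [phi^*(x)] because
    [phi] is convex and every point of the closed ball is a limit of points
    [t y] of the open ball. *)

Section EuclideanPlane.
Context {R : realType}.
Implicit Types (t : R) (x y z : R * R).

Lemma dot2C x y : dot2 x y = dot2 y x.
Proof. by rewrite /dot2; ring. Qed.

Lemma dot2DL x y z : dot2 (x + y) z = dot2 x z + dot2 y z.
Proof. by rewrite /dot2 /=; ring. Qed.

Lemma dot2BL x y z : dot2 (x - y) z = dot2 x z - dot2 y z.
Proof. by rewrite /dot2 /=; ring. Qed.

Lemma dot2ZL t x y : dot2 (t *: x) y = t * dot2 x y.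
Proof. by rewrite /dot2 -!mulrA -mulrDr. Qed.

Lemma dot2ZR t x y : dot2 x (t *: y) = t * dot2 x y.
Proof. by rewrite dot2C dot2ZL dot2C. Qed.

Lemma dot2_ge0 x : 0 <= dot2 x x.
Proof. by rewrite /dot2 addr_ge0 // -expr2 sqr_ge0. Qed.

Lemma enorm2_ge0 x : 0 <= enorm2 x.
Proof. exact: sqrtr_ge0. Qed.

Lemma sqr_enorm2 x : enorm2 x ^+ 2 = dot2 x x.
Proof. by rewrite /enorm2 sqr_sqrtr // dot2_ge0. Qed.

Lemma enorm2_0 : enorm2 (0 : R * R) = 0.
Proof. by rewrite /enorm2 /dot2 /= mulr0 addr0 sqrtr0. Qed.

Lemma enorm2Z t x : enorm2 (t *: x) = `|t| * enorm2 x.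
Proof.
rewrite /enorm2 dot2ZL dot2C dot2ZL mulrA -expr2 sqrtrM ?sqr_ge0 //.
by rewrite sqrtr_sqr.
Qed.

Lemma dot2_le_enorm2 x y : dot2 x y <= enorm2 x * enorm2 y.
Proof.
have nxy_ge0 : 0 <= enorm2 x * enorm2 y by rewrite mulr_ge0 ?enorm2_ge0.
have [xy_le0|xy_gt0] := lerP (dot2 x y) 0; first exact: le_trans xy_le0 _.
have : dot2 x y ^+ 2 <= (enorm2 x * enorm2 y) ^+ 2.
  rewrite exprMn !sqr_enorm2 /dot2 expr2.
  by have := sqr_ge0 (x.1 * y.2 - x.2 * y.1); rewrite expr2; nra.
rewrite !expr2; nra.
Qed.

Lemma dot2_le_enorm2_ball x [y] : enorm2 y <= 1 -> dot2 x y <= enorm2 x.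
Proof.
move=> y_le1; apply: le_trans (dot2_le_enorm2 x y) _.
by rewrite ler_piMr ?enorm2_ge0.
Qed.

Lemma unit_ball2_0 : unit_ball2 (0 : R * R).
Proof. by rewrite /unit_ball2 /= enorm2_0 ltr01. Qed.

Lemma legendre_ge (f : R * R -> \bar R) x y :
  ((dot2 x y)%:E - f x <= legendre f y)%E.
Proof. by apply: ereal_sup_ubound; exists x. Qed.

End EuclideanPlane.

Lemma le_convex_comb_lt1 (R : realFieldType) (a b p : R) :
  (forall t, 0 <= t -> t < 1 -> t * a + (1 - t) * b <= p) -> a <= p.
Proof.
move=> comb_le; have b_le : b <= p.
  by have := comb_le 0 (lexx _) ltr01; rewrite mul0r add0r subr0 mul1r.
rewrite leNgt; apply/negP => p_lt_a.
have ab_gt0 : 0 < a - b by rewrite subr_gt0 (le_lt_trans b_le).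
pose u := (a - p) / (a - b).
have u_gt0 : 0 < u by rewrite divr_gt0 // subr_gt0.
have u_le1 : u <= 1 by rewrite ler_pdivrMr // mul1r lerD2l lerN2.
have := comb_le (1 - u / 2) ltac:(lra) ltac:(lra).
have : u * (a - b) = a - p by rewrite /u divfK ?gt_eqF.
nra.
Qed.

Section PogorelovDual.
Context {R : realType} {K : nat} {d : 'I_K -> R * R} {v : 'I_K -> R}.
Hypothesis K_gt0 : (0 < K)%N.
Implicit Types (t : R) (x y z : R * R).

Let k0 : 'I_K := Ordinal K_gt0.

Let pmax_bigmax_attained y : exists i,
  (\big[Order.max/-oo]_(k < K) (dot2 y (d k) - v k)%:E)%E =
  (dot2 y (d i) - v i)%:E.
Proof.
have [i _ ->] := @eq_bigmax _ _ _ (-oo)%E k0 xpredT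
  (fun k => (dot2 y (d k) - v k)%:E) isT (fun _ _ => leNye _).
by exists i.
Qed.

Lemma pmax_attained y : exists k, pmax d v y = dot2 y (d k) - v k.
Proof. by have [i eq_i] := pmax_bigmax_attained y; exists i; rewrite /pmax eq_i. Qed.

Lemma pmax_ge y k : dot2 y (d k) - v k <= pmax d v y.
Proof.
have [i eq_i] := pmax_bigmax_attained y.
rewrite /pmax eq_i /= -lee_fin -eq_i.
exact: (le_bigmax -oo%E (fun k => (dot2 y (d k) - v k)%:E)).
Qed.

Lemma pmax_convex t y z : 0 <= t <= 1 ->
  pmax d v (t *: y + (1 - t) *: z) <= t * pmax d v y + (1 - t) * pmax d v z.
Proof.
case/andP=> t_ge0 t_le1; have [k ->] := pmax_attained (t *: y + (1 - t) *: z).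
have := pmax_ge y k; have := pmax_ge z k.
rewrite dot2DL !dot2ZL; nra.
Qed.

Lemma phi_ext_ball [y] : unit_ball2 y -> phi_ext d v y = (pmax d v y)%:E.
Proof. by move=> y_ball; rewrite /phi_ext asboolT. Qed.

Lemma phi_star_ge x [y] : unit_ball2 y ->
  ((dot2 x y - pmax d v y)%:E <= phi_star d v x)%E.
Proof.
by move=> y_ball; apply: ereal_sup_ubound; exists y; rewrite ?phi_ext_ball.
Qed.

Lemma phi_star_le k : (phi_star d v (d k) <= (v k)%:E)%E.
Proof.
apply: ge_ereal_sup => _ [y /phi_ext_ball -> <-].
by rewrite -EFinB lee_fin dot2C lerBlDl -lerBlDr pmax_ge.
Qed.

(* [phi] is convex, so [x.(t y) - phi(t y)] dominates an affine function of
   [t] whose value at [t = 1] is [x.y - phi(y)]. *)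
Lemma phi_star_ge_closed_ball x [y] : enorm2 y <= 1 ->
  ((dot2 x y - pmax d v y)%:E <= phi_star d v x)%E.
Proof.
move=> y_le1; have := phi_star_ge x (@unit_ball2_0 R).
case phi_x: (phi_star d v x) => [p | | ] // phi0_le; last exact: leey.
rewrite lee_fin; apply: (@le_convex_comb_lt1 _ _ (- pmax d v 0)) => t t0 t1.
have ty_ball : unit_ball2 (t *: y).
  by rewrite /unit_ball2 /= enorm2Z ger0_norm // (le_lt_trans _ t1) ?ler_piMr.
have := phi_star_ge x ty_ball; rewrite phi_x lee_fin; apply: le_trans.
have := @pmax_convex t y 0; rewrite scaler0 addr0 t0 ltW //= => /(_ isT).
by rewrite dot2ZR; lra.
Qed.

Lemma psi_le k z :
  (psi d v z <= phi_star d v (d k) + (enorm2 (z - d k))%:E)%E.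
Proof. exact: (bigmin_le _ k). Qed.

Lemma psi_le_heights k : (psi d v (d k) <= (v k)%:E)%E.
Proof. by apply: le_trans (psi_le k _) _; rewrite subrr enorm2_0 adde0 phi_star_le. Qed.

(* [phi^*] is 1-Lipschitz: it has subgradients [y] with [|y| < 1]. *)
Lemma legendre_psi_le_pmax [y] : unit_ball2 y ->
  (legendre (psi d v) y <= (pmax d v y)%:E)%E.
Proof.
move=> y_ball; apply: ge_ereal_sup => _ [z _ <-].
suff psi_ge : ((dot2 z y - pmax d v y)%:E <= psi d v z)%E.
  by apply: le_trans (leeB (lexx _) psi_ge) _; rewrite -EFinB lee_fin; lra.
apply: le_bigmin => [|k _]; first exact: leey.
apply: le_trans (leeD (phi_star_ge (d k) y_ball) (lexx _)).
rewrite -EFinD lee_fin.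
have := dot2_le_enorm2_ball (z - d k) (ltW y_ball); rewrite dot2BL; lra.
Qed.

Lemma pmax_le_legendre_psi y :
  ((pmax d v y)%:E <= legendre (psi d v) y)%E.
Proof.
have [k ->] := pmax_attained y.
apply: le_trans (legendre_ge _ (d k) y); rewrite EFinB dot2C.
exact: leeB (psi_le_heights k).
Qed.

(* Along the ray [d_k0 + t y], [psi] grows like [t |y|] while [z.y] grows
   like [t |y|^2]. *)
Lemma legendre_psi_out_ball [y] : 1 < enorm2 y ->
  legendre (psi d v) y = +oo%E.
Proof.
move=> y_gt1; apply: eq_infty => M; set s := enorm2 y.
have ss_gt0 : 0 < s ^+ 2 - s by rewrite subr_gt0 expr2 ltr_pMr // (lt_trans ltr01).
set A := M - dot2 (d k0) y + v k0.
pose t := `|A| / (s ^+ 2 - s).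
have t_ge0 : 0 <= t by rewrite /t divr_ge0 // ltW.
have tA : t * (s ^+ 2 - s) = `|A| by rewrite /t divfK ?gt_eqF.
pose z := d k0 + t *: y.
have psi_z : (psi d v z <= (v k0 + t * s)%:E)%E.
  apply: le_trans (psi_le k0 z) _.
  rewrite /z [d k0 + _]addrC addrK enorm2Z ger0_norm // EFinD.
  exact: leeD (phi_star_le k0) (lexx _).
apply: le_trans (legendre_ge _ z y); apply: le_trans (leeB (lexx _) psi_z).
rewrite -EFinB lee_fin /z dot2DL dot2ZL -sqr_enorm2 -/s.
by have := ler_norm A; rewrite /A; nra.
Qed.

End PogorelovDual.

Theorem lemma2p7 (R : realType) (K : nat) (hK : (0 < K)%N)
  (d : 'I_K -> R * R) (alpha : 'I_K -> R)
  (halpha : forall k, 0 < alpha k)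
  (hsum : \sum_(k < K) alpha k = pi)
  (v : 'I_K -> R)
  (hpog : pogorelov d alpha v) :
  phi_star d v = legendre (legendre (psi d v)).
Proof.
apply/funext => x; apply/eqP; rewrite eq_le; apply/andP; split.
- apply: ge_ereal_sup => _ [y y_ball <-].
  rewrite phi_ext_ball // dot2C; apply: le_trans (legendre_ge _ y x).
  exact: leeB (lexx _) (legendre_psi_le_pmax y_ball).
- apply: ge_ereal_sup => _ [y _ <-].
  have [y_le1|y_gt1] := lerP (enorm2 y) 1.
    apply: le_trans (phi_star_ge_closed_ball hK x y_le1).
    by rewrite EFinB dot2C; apply: leeB (pmax_le_legendre_psi hK y).
  by rewrite (legendre_psi_out_ball hK y_gt1) /= leNye.
Qed.
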